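(* Suppose that $\mathcal X$ is a wide family of subsets of $\mathbb N$ and $\mathfrak A=(\alpha_X:X\in\mathcal X)$ with $\alpha_X\in(71/72,1]$ for all $X\in\mathcal X$. Then any two elements $S,T\in\mathcal M_{\mathcal X,\mathfrak A}$ almost commute, i.e., $ST-TS\in\mathcal K(\ell_2)$.
   Context: Fix an orthonormal basis $(e_k)$ of $\ell_2$. For $A\subseteq\mathbb N$, $P_A$ is the projection onto $\overline{\mathrm{span}}\{e_{2k},e_{2k+1}:k\in A\}$; $H_n=\mathrm{span}\{e_{2n},e_{2n+1}\}$. $\mathcal A_0$ is the set of $T\in\mathcal B(\ell_2)$ with $\langle Te_k,e_m\rangle\ne0\Rightarrow\{k,m\}\subseteq\{2n,2n+1\}$ for some $n$, written $T=(T_n)$, $T_n\in\mathcal B(H_n)$; $\mathcal A_0(X)=\{T\in\mathcal A_0:T_n=0\ \forall n\notin X\}$. For $\alpha\in(71/72,1]$, $f_{\alpha,2n}=\alpha e_{2n}+\sqrt{1-\alpha^2}e_{2n+1}$, $f_{\alpha,2n+1}=\sqrt{1-\alpha^2}e_{2n}-\alpha e_{2n+1}$; $\mathcal D(X,\alpha)$: $T\in\mathcal A_0(X)$ with $T_n$ diagonal in $\{f_{\alpha,2n},f_{\alpha,2n+1}\}$ for $n\in X$; $\mathcal D_{\mathcal K}(X,\alpha)=\{S+R:S\in\mathcal D(X,\alpha),R\in\mathcal K(\ell_2)\cap\mathcal A_0(X)\}$. $\mathcal M_{\mathcal X,\mathfrak A}=\{T\in\mathcal A_0:P_XTP_X\in\mathcal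 D_{\mathcal K}(X,\alpha_X)\ \forall X\in\mathcal X\}$. $\mathcal X$ is wide if every infinite subset of $\mathbb N$ has infinite intersection with some member of $\mathcal X$. *)

From HB Require Import structures.
From mathcomp Require Import all_boot all_order all_algebra.
From mathcomp Require Import complex.
From mathcomp Require Import boolp classical_sets cardinality reals.
Set Implicit Arguments. Unset Strict Implicit. Unset Printing Implicit Defensive.
Import Order.TTheory GRing.Theory Num.Theory.
Local Open Scope ring_scope.
Local Open Scope classical_set_scope.
Local Open Scope complex_scope.

Section Defs.
Variable R : realType.
Local Notation C := R[i].

Definition vec := nat -> C.
Definition sqmod (z : C) : R := (complex.Re z) ^+ 2 + (complex.Im z) ^+ 2.
Definition psum2 (x : vec) (n : nat) : R := \sum_(k < n) sqmod (x k).
Definition ell2 (x : vec) : Prop := exists M : R, forall n, psum2 x n <= M.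

Definition vadd (x y : vec) : vec := fun k => x k + y k.
Definition vsub (x y : vec) : vec := fun k => x k - y k.
Definition vscale (c : C) (x : vec) : vec := fun k => c * x k.

(* operators are functions on sequences; only their restriction to l2 matters *)
Definition op := vec -> vec.

Definition bounded_op (T : op) : Prop :=
  [/\ forall x, ell2 x -> ell2 (T x),
      forall x y, ell2 x -> ell2 y -> T (vadd x y) = vadd (T x) (T y),
      forall c x, ell2 x -> T (vscale c x) = vscale c (T x)
    & exists c : R, 0 <= c /\ forall x (M : R), ell2 x ->
         (forall n, psum2 x n <= M) -> forall n, psum2 (T x) n <= c * M].

(* compact operator: bounded, and the image of every bounded sequence in l2
   has a Cauchy (hence, l2 being complete, convergent) subsequence *)
Definition compact_op (T : op) : Prop :=
  bounded_op T /\
  forall (x : nat -> vec) (M : R),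
    (forall j, ell2 (x j)) -> (forall j n, psum2 (x j) n <= M) ->
    exists phi : nat -> nat, (forall i, (phi i < phi i.+1)%N) /\
      forall eps : R, 0 < eps -> exists N, forall i j, (N <= i)%N -> (N <= j)%N ->
        forall n, psum2 (vsub (T (x (phi i))) (T (x (phi j)))) n <= eps.

Definition comp (S T : op) : op := fun x => S (T x).
Definition opsub (S T : op) : op := fun x => vsub (S x) (T x).

Definition e (k : nat) : vec := fun i => if i == k then 1 else 0.

Definition entry (T : op) (k m : nat) : C := T (e k) m.

(* A_0: <T e_k, e_m> <> 0 implies {k,m} ⊆ {2n,2n+1} for some n, i.e. k/2 = m/2 *)
Definition A0 (T : op) : Prop :=
  bounded_op T /\ forall k m, entry T k m != 0 -> k./2 = m./2.

(* A_0(X): T_n = 0 for n ∉ X *)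
Definition A0X (X : set nat) (T : op) : Prop :=
  A0 T /\ forall k m, k./2 = m./2 -> ~ X (k./2) -> entry T k m = 0.

(* P_A: projection onto closed span of e_{2k}, e_{2k+1}, k in A *)
Definition proj (A : set nat) : op :=
  fun x i => if `[< A (i./2) >] then x i else 0.

Definition f_even (alpha : R) (n : nat) : vec :=
  fun i => if i == n.*2 then alpha%:C
           else if i == n.*2.+1 then (Num.sqrt (1 - alpha ^+ 2))%:C else 0.
Definition f_odd (alpha : R) (n : nat) : vec :=
  fun i => if i == n.*2 then (Num.sqrt (1 - alpha ^+ 2))%:C
           else if i == n.*2.+1 then - alpha%:C else 0.

(* D(X, alpha): T in A_0(X), with T_n diagonal in {f_{alpha,2n}, f_{alpha,2n+1}}
   for every n in X *)
Definition Dset (X : set nat) (alpha : R) (T : op) : Prop :=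
  A0X X T /\ forall n, X n ->
    (exists lam : C, T (f_even alpha n) = vscale lam (f_even alpha n)) /\
    (exists mu : C, T (f_odd alpha n) = vscale mu (f_odd alpha n)).

Definition DKset (X : set nat) (alpha : R) (T : op) : Prop :=
  exists S Rk : op, [/\ Dset X alpha S, compact_op Rk, A0X X Rk &
    forall x, ell2 x -> T x = vadd (S x) (Rk x)].

Definition Mset (XX : set (set nat)) (alpha : set nat -> R) (T : op) : Prop :=
  A0 T /\ forall X, XX X -> DKset X (alpha X) (comp (proj X) (comp T (proj X))).

Definition wide (XX : set (set nat)) : Prop :=
  forall Y : set nat, infinite_set Y -> exists2 X, XX X & infinite_set (X `&` Y).

End Defs.

From mathcomp Require Import all_boot all_order all_algebra.
From mathcomp Require Import complex.
From mathcomp Require Import boolp classical_sets cardinality reals.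
From mathcomp Require Import topology normedtype sequences.
From mathcomp Require Import ring lra zify.
Set Implicit Arguments. Unset Strict Implicit. Unset Printing Implicit Defensive.
Import Order.TTheory GRing.Theory Num.Theory.
Import numFieldNormedType.Exports.
Local Open Scope ring_scope.
Local Open Scope classical_set_scope.

(* An operator of A_0 acts on each H_n through the 2x2 matrix [block A n], so the
   commutator U = ST - TS is again in A_0, with blocks [S_n T_n - T_n S_n].  A
   block-diagonal operator whose blocks tend to 0 is compact (diagonal extraction
   controls finitely many coordinates, the small blocks control the tail).
   If the blocks of U did not tend to 0, the set Y of blocks where some entry of
   U has squared modulus > eps would be infinite, and wideness gives X in the family
   meeting Y infinitely often.  For n in X we have S_n = D_n + K_n and
   T_n = D'_n + K'_n, where D_n, D'_n are diagonal in the common basis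
   f_{alpha,2n}, f_{alpha,2n+1}, hence commute, and the blocks of the compact
   operators K, K' tend to 0.  So [S_n, T_n] = [D_n, K'_n] + [K_n, T_n] is small
   for large n in X: a contradiction. *)

Section SquaredModulus.
Variable R : realType.
Local Notation C := R[i].
Implicit Types a b : C.

Lemma sqmod_ge0 a : 0 <= sqmod a.
Proof. by case: a => a1 a2; rewrite /sqmod /=; nra. Qed.

Lemma sqmod_eq0 a : sqmod a = 0 -> a = 0.
Proof.
case: a => a1 a2; rewrite /sqmod /= => h.
have -> : a1 = 0 by nra.
by have -> : a2 = 0 by nra.
Qed.

Lemma sqmod0 : sqmod (0 : C) = 0.
Proof. by rewrite /sqmod /= expr0n /= addr0. Qed.

Lemma sqmod1 : sqmod (1 : C) = 1.
Proof. by rewrite /sqmod /= expr1n expr0n /= addr0. Qed.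

Lemma sqmodM a b : sqmod (a * b) = sqmod a * sqmod b.
Proof. by case: a => a1 a2; case: b => b1 b2; rewrite /sqmod /=; ring. Qed.

Lemma sqmodD_le a b : sqmod (a + b) <= 2 * sqmod a + 2 * sqmod b.
Proof.
case: a => a1 a2; case: b => b1 b2; rewrite /sqmod /=.
by have := sqr_ge0 (a1 - b1); have := sqr_ge0 (a2 - b2); nra.
Qed.

Lemma sqmodB_le a b : sqmod (a - b) <= 2 * sqmod a + 2 * sqmod b.
Proof.
case: a => a1 a2; case: b => b1 b2; rewrite /sqmod /=.
by have := sqr_ge0 (a1 + b1); have := sqr_ge0 (a2 + b2); nra.
Qed.

Lemma sqmod_eq0_small a (c : R) : 0 <= c ->
  (forall eps : R, 0 < eps -> sqmod a <= c * eps) -> a = 0.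
Proof.
move=> c0 small; apply: sqmod_eq0; apply/eqP; rewrite eq_le sqmod_ge0 andbT.
rewrite leNgt; apply/negP => a_gt0.
have c2_gt0 : 0 < 2 * (c + 1) by lra.
have := small (sqmod a / (2 * (c + 1))) (divr_gt0 a_gt0 c2_gt0).
rewrite mulrCA ler_pMr // ler_pdivlMr; lra.
Qed.

End SquaredModulus.

Section SquareSummable.
Variable R : realType.
Local Notation C := R[i].
Implicit Types (x y z : vec R) (c : C).

Lemma psum2S x n : psum2 x n.+1 = psum2 x n + sqmod (x n).
Proof. by rewrite /psum2 big_ord_recr. Qed.

Lemma psum2_0 x : psum2 x 0 = 0.
Proof. by rewrite /psum2 big_ord0. Qed.

Lemma psum2_ge0 x n : 0 <= psum2 x n.
Proof. by apply: sumr_ge0 => i _; apply: sqmod_ge0. Qed.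

Lemma psum2_le_psum2 x m n : (m <= n)%N -> psum2 x m <= psum2 x n.
Proof.
move=> /subnK <-; elim: (n - m)%N => [|k IH]; first by rewrite add0n.
by rewrite addSn psum2S; apply: le_trans IH _; rewrite lerDl sqmod_ge0.
Qed.

Lemma sqmod_le_psum2 x n : sqmod (x n) <= psum2 x n.+1.
Proof. by rewrite psum2S lerDr psum2_ge0. Qed.

Lemma psum2_le_combination x y z (a b : R) :
  (forall k, sqmod (x k) <= a * sqmod (y k) + b * sqmod (z k)) ->
  forall n, psum2 x n <= a * psum2 y n + b * psum2 z n.
Proof.
move=> h; elim=> [|n IH]; first by rewrite !psum2_0 !mulr0 addr0.
by rewrite !psum2S; have := h n; lra.
Qed.

Lemma psum2_le_scale x y (a : R) :
  (forall k, sqmod (x k) <= a * sqmod (y k)) -> forall n, psum2 x n <= a * psum2 y n.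
Proof.
move=> h; elim=> [|n IH]; first by rewrite !psum2_0 mulr0.
by rewrite !psum2S mulrDr; apply: lerD.
Qed.

Lemma psum2_subB x y n : psum2 (vsub x y) n <= 2 * psum2 x n + 2 * psum2 y n.
Proof. by apply: psum2_le_combination => k; apply: sqmodB_le. Qed.

Lemma ell2_sub x y : ell2 x -> ell2 y -> ell2 (vsub x y).
Proof.
move=> [M1 h1] [M2 h2]; exists (2 * M1 + 2 * M2) => n.
by have := psum2_subB x y n; have := h1 n; have := h2 n; lra.
Qed.

Lemma ell2_add x y : ell2 x -> ell2 y -> ell2 (vadd x y).
Proof.
move=> [M1 h1] [M2 h2]; exists (2 * M1 + 2 * M2) => n.
have := psum2_le_combination (fun k => sqmodD_le (x k) (y k)) n.
by have := h1 n; have := h2 n; lra.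
Qed.

Lemma ell2_scale c x : ell2 x -> ell2 (vscale c x).
Proof.
move=> [M h]; exists (sqmod c * M) => n.
apply: le_trans (psum2_le_scale (a := sqmod c) _ n) _.
  by move=> k; rewrite sqmodM.
by apply: ler_wpM2l; [apply: sqmod_ge0 | apply: h].
Qed.

Lemma psum2_e k n : psum2 (e R k) n = (k < n)%:R.
Proof.
elim: n => [|n IH]; first by rewrite psum2_0.
rewrite psum2S IH /e ltnS; case: (ltngtP k n) => _.
- by rewrite sqmod0 addr0.
- by rewrite sqmod0 addr0.
- by rewrite sqmod1 add0r.
Qed.

Lemma psum2_e_le1 k n : psum2 (e R k) n <= 1.
Proof. by rewrite psum2_e; case: ltnP. Qed.

Lemma ell2_e k : ell2 (e R k).
Proof. by exists 1; apply: psum2_e_le1. Qed.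

Lemma ell2_finite_support x N : (forall k, (N <= k)%N -> x k = 0) -> ell2 x.
Proof.
move=> x0; exists (psum2 x N) => n; case: (leqP n N) => [|/ltnW/subnKC <-].
  exact: psum2_le_psum2.
elim: (n - N)%N => [|d IH]; first by rewrite addn0.
by rewrite addnS psum2S x0 ?leq_addr // sqmod0 addr0.
Qed.

Definition trunc N x : vec R := fun k => if (k < N)%N then x k else 0.

Lemma ell2_trunc N x : ell2 x -> ell2 (trunc N x).
Proof.
move=> [M h]; exists M => n; apply: le_trans (h n).
rewrite -[psum2 x n]mul1r; apply: psum2_le_scale => k; rewrite mul1r /trunc.
by case: ifP; rewrite ?sqmod0 ?sqmod_ge0.
Qed.

Lemma truncS N x : trunc N.+1 x = vadd (trunc N x) (vscale (x N) (e R N)).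
Proof.
apply: funext => k; rewrite /trunc /vadd /vscale /e ltnS leq_eqVlt.
by case: (eqVneq k N) => [->|_] /=; rewrite ?ltnn ?add0r ?mulr1 ?mulr0 ?addr0.
Qed.

Lemma psum2_sub_trunc x N n :
  psum2 (vsub x (trunc N x)) n = psum2 x n - psum2 x (minn n N).
Proof.
elim: n => [|n IH]; first by rewrite min0n psum2_0 subrr.
rewrite !psum2S IH /vsub /trunc; case: (ltnP n N) => nN.
  by rewrite (minn_idPl nN) psum2S !subrr sqmod0 addr0.
by rewrite (minn_idPr (leqW nN)) subr0; ring.
Qed.

Lemma trunc_approx x : ell2 x -> forall eps : R, 0 < eps ->
  exists N, forall n, psum2 (vsub x (trunc N x)) n <= eps.
Proof.
move=> [M hM] eps eps_gt0.
have has_sup_psum2 : has_sup (range (psum2 x)).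
  by split; [exists (psum2 x 0), 0%N | exists M => _ [n _ <-]].
have [_ [N _ <-] hN] := sup_adherent eps_gt0 has_sup_psum2.
exists N => n; rewrite psum2_sub_trunc; case: (leqP n N) => _.
  by rewrite subrr ltW.
have : psum2 x n <= sup (range (psum2 x)) by apply: sup_upper_bound => //; exists n.
lra.
Qed.

End SquareSummable.

Section BoundedOperators.
Variable R : realType.
Implicit Types (x y z : vec R) (A B : op R).

Lemma bounded_op_ell2 A x : bounded_op A -> ell2 x -> ell2 (A x).
Proof. by case=> + _ _ _; apply. Qed.

Lemma bounded_opD A x y :
  bounded_op A -> ell2 x -> ell2 y -> A (vadd x y) = vadd (A x) (A y).
Proof. by case=> _ + _ _; apply. Qed.

Lemma bounded_opZ A c x : bounded_op A -> ell2 x -> A (vscale c x) = vscale c (A x).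
Proof. by case=> _ _ + _; apply. Qed.

Lemma bounded_opB A x y :
  bounded_op A -> ell2 x -> ell2 y -> A (vsub x y) = vsub (A x) (A y).
Proof.
move=> hA hx hy; have vsubE u v : vsub u v = vadd u (vscale (-1) v).
  by apply: funext => k; rewrite /vsub /vadd /vscale mulN1r.
by rewrite !vsubE (bounded_opD hA hx (ell2_scale _ hy)) (bounded_opZ _ hA hy).
Qed.

Lemma bounded_op_comp A B : bounded_op A -> bounded_op B -> bounded_op (comp A B).
Proof.
move=> hA hB; have [_ _ _ [cA [cA0 hcA]]] := hA; have [_ _ _ [cB [cB0 hcB]]] := hB.
split=> [x hx | x y hx hy | c x hx | ]; rewrite /comp.
- exact/(bounded_op_ell2 hA)/(bounded_op_ell2 hB).
- by rewrite (bounded_opD hB) // (bounded_opD hA) //; apply: (bounded_op_ell2 hB).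
- by rewrite (bounded_opZ _ hB) // (bounded_opZ _ hA) //; apply: (bounded_op_ell2 hB).
- exists (cA * cB); split=> [|x M hx hM n]; first exact: mulr_ge0.
  rewrite -mulrA; apply: hcA; first exact: bounded_op_ell2.
  exact: hcB.
Qed.

Lemma bounded_op_sub A B : bounded_op A -> bounded_op B -> bounded_op (opsub A B).
Proof.
move=> hA hB; have [_ _ _ [cA [cA0 hcA]]] := hA; have [_ _ _ [cB [cB0 hcB]]] := hB.
split=> [x hx | x y hx hy | c x hx | ]; rewrite /opsub.
- by apply: ell2_sub; apply: bounded_op_ell2.
- rewrite (bounded_opD hA) // (bounded_opD hB) //.
  by apply: funext => k; rewrite /vsub /vadd; ring.
- rewrite (bounded_opZ _ hA) // (bounded_opZ _ hB) //.
  by apply: funext => k; rewrite /vsub /vscale; ring.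
- exists (2 * cA + 2 * cB); split=> [|x M hx hM n]; first lra.
  have := psum2_subB (A x) (B x) n; have := hcA x M hx hM n; have := hcB x M hx hM n.
  have -> : (2 * cA + 2 * cB) * M = 2 * (cA * M) + 2 * (cB * M) by ring.
  lra.
Qed.

Lemma entry_bounded A : bounded_op A ->
  exists c : R, 0 <= c /\ forall k m, sqmod (entry A k m) <= c.
Proof.
case=> _ _ _ [c [c0 hc]]; exists c; split=> // k m.
apply: le_trans (sqmod_le_psum2 _ _) _; rewrite -[c]mulr1.
by apply: hc; [apply: ell2_e | apply: psum2_e_le1].
Qed.

(* Continuity: [A z m] is the limit of [A (trunc N z) m], and every such
   truncation is a finite combination of basis vectors. *)
Lemma bounded_op_apply_eq0 A z m : bounded_op A -> ell2 z ->
  (forall k, z k * entry A k m = 0) -> A z m = 0.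
Proof.
move=> hA hz hzA; have [_ _ _ [c [c0 hc]]] := hA.
have Atrunc N : A (trunc N z) m = 0.
  elim: N => [|N IH] /=.
    have -> : trunc 0 z = vsub z z by apply: funext => k; rewrite /vsub subrr.
    by rewrite (bounded_opB hA) // /vsub subrr.
  have [hzN heN] := (ell2_trunc N hz, ell2_e R N).
  rewrite truncS (bounded_opD hA hzN (ell2_scale _ heN)) (bounded_opZ _ hA heN).
  by rewrite /vadd /vscale IH add0r -/(entry A N m) hzA.
apply: (sqmod_eq0_small c0) => eps eps_gt0.
have [N hN] := trunc_approx hz eps_gt0.
rewrite -[A z m]subr0 -(Atrunc N) -/(vsub (A z) (A (trunc N z)) m).
have hzN := ell2_trunc N hz.
rewrite -(bounded_opB hA hz hzN); apply: le_trans (sqmod_le_psum2 _ _) _.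
by apply: hc => //; apply: ell2_sub.
Qed.

Lemma A0_apply A x m : A0 A -> ell2 x ->
  A x m = \sum_(l < 2) entry A ((m./2).*2 + l) m * x ((m./2).*2 + l)%N.
Proof.
move=> [hA hA0] hx; set b := (m./2).*2.
pose y := vadd (vscale (x b) (e R b)) (vscale (x b.+1) (e R b.+1)).
have hy : ell2 y by apply: ell2_add; apply: ell2_scale; apply: ell2_e.
have Ay : A y m = x b * entry A b m + x b.+1 * entry A b.+1 m.
  have [he0 he1] := (ell2_e R b, ell2_e R b.+1).
  by rewrite (bounded_opD hA (ell2_scale _ he0) (ell2_scale _ he1)) !(bounded_opZ _ hA).
have Az : A (vsub x y) m = 0.
  apply: (bounded_op_apply_eq0 hA (ell2_sub hx hy)) => k.
  have [->|/hA0 same_block] := eqVneq (entry A k m) 0; first by rewrite mulr0.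
  rewrite -(odd_double_half k) same_block -/b /vsub /y /vadd /vscale /e.
  by case: (odd k); rewrite /= ?eqxx ?(gtn_eqF (ltnSn b)) ?(ltn_eqF (ltnSn b));
     rewrite ?add1n ?add0n ?eqxx ?mulr1 ?mulr0 ?addr0 ?add0r subrr mul0r.
have xE : x = vadd y (vsub x y).
  by apply: funext => k; rewrite /vadd /vsub addrC subrK.
rewrite {1}xE (bounded_opD hA hy (ell2_sub hx hy)) {1}/vadd Ay Az addr0.
by rewrite big_ord_recr big_ord1 /= addn0 addn1 mulrC [x b.+1 * _]mulrC.
Qed.

End BoundedOperators.

Section Blocks.
Variable R : realType.
Local Notation C := R[i].
Implicit Types (x : vec R) (A B : op R).

(* The matrix of [T_n] in the basis [e_{2n}, e_{2n+1}] of [H_n]. *)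
Definition block A n : 'M[C]_2 := \matrix_(i, j) entry A (n.*2 + j) (n.*2 + i).

Lemma half_block n (i : 'I_2) : (n.*2 + i)./2 = n.
Proof. by have := ltn_ord i; lia. Qed.

Lemma block_apply A x n (i : 'I_2) : A0 A -> ell2 x ->
  A x (n.*2 + i)%N = \sum_(j < 2) block A n i j * x (n.*2 + j)%N.
Proof.
by move=> hA hx; rewrite A0_apply // half_block; apply: eq_bigr => j _; rewrite mxE.
Qed.

Lemma block_comp A B n : A0 A -> bounded_op B ->
  block (comp A B) n = block A n *m block B n.
Proof.
move=> hA hB; apply/matrixP => i j; rewrite !mxE /entry /comp.
rewrite block_apply //; last exact: bounded_op_ell2 hB (ell2_e R _).
by apply: eq_bigr => l _; rewrite !mxE.
Qed.

Lemma block_opsub A B n : block (opsub A B) n = block A n - block B n.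
Proof. by apply/matrixP => i j; rewrite !mxE. Qed.

Lemma A0_comp A B : A0 A -> A0 B -> A0 (comp A B).
Proof.
move=> hA [hB hB0]; split=> [|k m]; first exact: bounded_op_comp hA.1 hB.
apply: contraNeq => ne.
rewrite /entry /comp A0_apply //; last exact: bounded_op_ell2 hB (ell2_e R _).
apply/eqP/big1 => l _; rewrite -/(entry B k _).
have [->|/hB0] := eqVneq (entry B k ((m./2).*2 + l)) 0.
  by rewrite mulr0.
by rewrite half_block => /eqP; rewrite (negPf ne).
Qed.

Lemma A0_sub A B : A0 A -> A0 B -> A0 (opsub A B).
Proof.
move=> [hA hA0] [hB hB0]; split=> [|k m]; first exact: bounded_op_sub.
have [zA|/hA0 //] := eqVneq (entry A k m) 0.
by rewrite /entry /opsub /vsub -/(entry A k m) zA sub0r oppr_eq0 => /hB0.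
Qed.

End Blocks.

Section TwoByTwo.
Variable R : realType.
Local Notation C := R[i].
Implicit Types (M N : 'M[C]_2) (a b : R).

Lemma sqmod_mulmx_le M N a b :
  (forall i j, sqmod (M i j) <= a) -> (forall i j, sqmod (N i j) <= b) ->
  forall i j, sqmod ((M *m N) i j) <= 4 * (a * b).
Proof.
move=> hM hN i j; rewrite mxE big_ord_recr big_ord1 /=.
apply: le_trans (sqmodD_le _ _) _; rewrite !sqmodM.
have prod_le k l k' l' : sqmod (M k l) * sqmod (N k' l') <= a * b.
  by apply: ler_pM; rewrite ?sqmod_ge0.
have -> : 4 * (a * b) = 2 * (a * b) + 2 * (a * b) by ring.
by apply: lerD; apply: ler_wpM2l.
Qed.

Definition mxcomm M N : 'M[C]_2 := M *m N - N *m M.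

Lemma mxcommDl M1 M2 N : mxcomm (M1 + M2) N = mxcomm M1 N + mxcomm M2 N.
Proof. by rewrite /mxcomm mulmxDl mulmxDr opprD addrACA. Qed.

Lemma mxcommDr M N1 N2 : mxcomm M (N1 + N2) = mxcomm M N1 + mxcomm M N2.
Proof. by rewrite /mxcomm mulmxDl mulmxDr opprD addrACA. Qed.

Lemma sqmod_mxcomm_le M N a b :
  (forall i j, sqmod (M i j) <= a) -> (forall i j, sqmod (N i j) <= b) ->
  forall i j, sqmod (mxcomm M N i j) <= 16 * (a * b).
Proof.
move=> hM hN i j.
have -> : mxcomm M N i j = (M *m N) i j - (N *m M) i j by rewrite !mxE.
apply: le_trans (sqmodB_le _ _) _.
have := sqmod_mulmx_le hM hN i j; have := sqmod_mulmx_le hN hM i j.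
by rewrite [b * a]mulrC; lra.
Qed.

End TwoByTwo.

Section DiagonalPart.
Local Open Scope complex_scope.
Variable R : realType.
Local Notation C := R[i].
Variables (alpha : R) (n : nat).

Definition fcol (j : 'I_2) : vec R := if j == ord0 then f_even alpha n else f_odd alpha n.

(* The matrix of the basis [f_{alpha,2n}, f_{alpha,2n+1}] of [H_n]: a reflection. *)
Definition fmx : 'M[C]_2 := \matrix_(i, j) fcol j (n.*2 + i)%N.

Lemma ell2_fcol j : ell2 (fcol j).
Proof.
apply: (@ell2_finite_support _ _ n.*2.+2) => k k_ge.
by rewrite /fcol /f_even /f_odd; case: ifP => _; rewrite !ifF //; apply/eqP; lia.
Qed.

Lemma fmx_mulmx_fmx : 0 <= alpha <= 1 -> fmx *m fmx = 1%:M.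
Proof.
move=> alpha01.
have unit_col : alpha%:C * alpha%:C + (Num.sqrt (1 - alpha ^+ 2))%:C * (Num.sqrt (1 - alpha ^+ 2))%:C = 1 :> C.
  have /sqr_sqrtr : 0 <= 1 - alpha ^+ 2 by case/andP: alpha01 => ? ?; nra.
  by rewrite -!rmorphM -rmorphD /= -!expr2 => ->; rewrite addrC subrK.
apply/matrixP => i j; rewrite !mxE big_ord_recr big_ord1 !mxE /=.
case: i j => [[|[|//]] ?] [[|[|//]] ?];
  rewrite /fcol /f_even /f_odd /= ?addn0 ?addn1 ?eqxx ?(gtn_eqF (ltnSn _)) /=.
- exact: unit_col.
- by rewrite mulrN mulrC subrr.
- by rewrite mulNr mulrC subrr.
- by rewrite mulrNN addrC.
Qed.

Lemma Dset_block_diagonalized X S : Dset X alpha S -> X n ->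
  exists d : 'rV[C]_2, block S n *m fmx = fmx *m diag_mx d.
Proof.
move=> [[hS _] eig] Xn; have [[lam Sfe] [mu Sfo]] := eig n Xn.
exists (\row_j if j == ord0 then lam else mu).
apply/matrixP => i j; rewrite mul_mx_diag !mxE.
under eq_bigr => l _ do rewrite [X in _ * X]mxE.
rewrite -block_apply //; last exact: ell2_fcol.
by rewrite /fcol; case: eqP => _; rewrite ?Sfe ?Sfo /vscale /= mulrC.
Qed.

End DiagonalPart.

Lemma Dset_block_commute (R : realType) X (alpha : R) (S T : op R) n :
  0 <= alpha <= 1 -> Dset X alpha S -> Dset X alpha T -> X n ->
  block S n *m block T n = block T n *m block S n.
Proof.
move=> alpha01 hS hT Xn; have F2 := fmx_mulmx_fmx n alpha01.
have diagonalize (A : op R) : Dset X alpha A ->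
    exists d, block A n = fmx alpha n *m diag_mx d *m fmx alpha n.
  move=> /Dset_block_diagonalized /(_ Xn) [d hd].
  by exists d; rewrite -hd -mulmxA F2 mulmx1.
have conj_mul (D D' : 'M_2) : fmx alpha n *m D *m fmx alpha n *m (fmx alpha n *m D' *m fmx alpha n)
    = fmx alpha n *m (D *m D') *m fmx alpha n.
  by rewrite !mulmxA -(mulmxA _ (fmx alpha n) (fmx alpha n)) F2 mulmx1 -!mulmxA.
have [[d ->] [d' ->]] := (diagonalize S hS, diagonalize T hT).
by rewrite !conj_mul diag_mxC.
Qed.

Lemma leq_increasing (f : nat -> nat) : (forall i, (f i < f i.+1)%N) -> forall i, (i <= f i)%N.
Proof. by move=> f_inc; elim=> // i IH; apply: leq_ltn_trans IH (f_inc i). Qed.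

Lemma ltn_increasing (f : nat -> nat) : (forall i, (f i < f i.+1)%N) ->
  forall i j, (i < j)%N -> (f i < f j)%N.
Proof. by move=> f_inc; apply: (@homo_ltn _ f (fun a b => a < b)%N) => // ? ? ?; apply: ltn_trans. Qed.

Section Subsequences.
Variable R : realType.
Local Notation C := R[i].

Definition cauchy_seq (u : nat -> C) : Prop :=
  forall eta : R, 0 < eta -> exists N, forall a b, (N <= a)%N -> (N <= b)%N ->
    sqmod (u a - u b) <= eta.

(* Squared differences avoid square roots: [|t| <= min 1 eps] gives [t^2 <= eps]. *)
Lemma bounded_real_cauchy_subseq (u : nat -> R) (B : R) : (forall n, `|u n| <= B) ->
  exists f : nat -> nat, (forall i, (f i < f i.+1)%N) /\
    forall eps : R, 0 < eps -> exists N, forall a b, (N <= a)%N -> (N <= b)%N ->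
      (u (f a) - u (f b)) ^+ 2 <= eps.
Proof.
move=> uB; have u_bounded : bounded_fun u.
  by exists B; split; [exact: num_real | move=> M BM x _; apply: le_trans (uB x) (ltW BM)].
have [f /increasing_seqP f_inc /cvg_ex [l u_cvg]] := bolzano_weierstrass u_bounded.
exists f; split=> // eps eps_gt0.
pose r := Num.min 1 eps / 2.
have r_gt0 : 0 < r by rewrite divr_gt0 // lt_min ltr01.
have [N _ hN] := (cvgrPdist_le _ _).1 u_cvg r r_gt0.
exists N => a b Na Nb; have := hN a Na; have := hN b Nb => /= la lb.
have : `|u (f a) - u (f b)| <= Num.min 1 eps.
  rewrite (_ : u (f a) - u (f b) = (l - u (f b)) - (l - u (f a))); last by ring.
  by apply: le_trans (ler_normB _ _) _; rewrite /r in la lb; lra.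
by rewrite le_min !ler_norml => /andP[/andP[? ?] /andP[? ?]]; nra.
Qed.

Lemma bounded_cauchy_subseq (u : nat -> C) (B : R) : (forall n, sqmod (u n) <= B) ->
  exists f : nat -> nat, (forall i, (f i < f i.+1)%N) /\ cauchy_seq (u \o f).
Proof.
move=> uB; have part_le (s t : R) : s ^+ 2 + t ^+ 2 <= B -> `|s| <= B + 1.
  by have := sqr_ge0 t; have := sqr_ge0 (s + 1/2); have := sqr_ge0 (s - 1/2);
     rewrite ler_norml => *; apply/andP; split; nra.
have Re_le n : `|complex.Re (u n)| <= B + 1.
  exact: (part_le _ (complex.Im (u n))) (uB n).
have Im_le n : `|complex.Im (u n)| <= B + 1.
  by apply: (part_le _ (complex.Re (u n))); rewrite addrC; exact: uB.
have [f1 [f1_inc Re_cauchy]] := bounded_real_cauchy_subseq Re_le.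
have [f2 [f2_inc Im_cauchy]] := bounded_real_cauchy_subseq (fun n => Im_le (f1 n)).
exists (f1 \o f2); split=> [i|eta eta_gt0]; first by apply: (ltn_increasing f1_inc); apply: f2_inc.
have sqmod_diff (z w : C) :
    sqmod (z - w) = (complex.Re z - complex.Re w) ^+ 2 + (complex.Im z - complex.Im w) ^+ 2.
  by case: z; case: w.
have eta2_gt0 : 0 < eta / 2 by lra.
have [N1 h1] := Re_cauchy _ eta2_gt0; have [N2 h2] := Im_cauchy _ eta2_gt0.
exists (maxn N1 N2) => a b; rewrite !geq_max => /andP[aN1 aN2] /andP[bN1 bN2] /=.
rewrite sqmod_diff; have f2_ge := leq_increasing f2_inc.
have := h1 _ _ (leq_trans aN1 (f2_ge a)) (leq_trans bN1 (f2_ge b)).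
by have := h2 _ _ aN2 bN2; lra.
Qed.

Lemma diagonal_subseq (y : nat -> vec R) (B : R) : (forall j k, sqmod (y j k) <= B) ->
  exists d : nat -> nat, (forall i, (d i < d i.+1)%N) /\
    forall k, cauchy_seq (fun i => y (d i) k).
Proof.
move=> yB; have refine_at (g : nat -> nat) k : exists f : nat -> nat,
    (forall i, (f i < f i.+1)%N) /\ cauchy_seq (fun i => y (g (f i)) k).
  exact: bounded_cauchy_subseq (fun n => yB (g n) k).
have [F hF] := choice (fun gk : (nat -> nat) * nat => refine_at gk.1 gk.2).
pose fix Phi k := if k is k'.+1 then Phi k' \o F (Phi k', k) else F (id, 0%N).
have Phi_cauchy k : cauchy_seq (fun i => y (Phi k i) k).
  by case: k => [|k]; [exact: (hF (id, 0%N)).2 | exact: (hF (Phi k, k.+1)).2].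
have F_ge g k := leq_increasing (hF (g, k)).1.
have Phi_inc k t : (Phi k t < Phi k t.+1)%N.
  elim: k t => [|k IH] t /=; first exact: (hF (id, 0%N)).1.
  by apply: (ltn_increasing IH); apply: (hF (Phi k, k.+1)).1.
have Phi_sub k i : (k <= i)%N -> exists G : nat -> nat,
    (forall t, (t <= G t)%N) /\ Phi i =1 Phi k \o G.
  elim: i => [|i IH]; first by rewrite leqn0 => /eqP ->; exists id.
  rewrite leq_eqVlt ltnS => /predU1P[-> | /IH [G [G_ge PhiG]]]; first by exists id.
  exists (G \o F (Phi i, i.+1)); split=> [t | t] /=; last by rewrite PhiG.
  exact: leq_trans (F_ge _ _ t) (G_ge _).
exists (fun i => Phi i i); split=> [i | k eta eta_gt0] /=.
  by apply: (ltn_increasing (Phi_inc i)); apply: leq_trans (ltnSn i) (F_ge _ _ i.+1).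
have [N hN] := Phi_cauchy k eta eta_gt0.
exists (maxn N k) => a b; rewrite !geq_max => /andP[Na ka] /andP[Nb kb].
have [[Ga [Ga_ge ->]] [Gb [Gb_ge ->]]] := (Phi_sub k a ka, Phi_sub k b kb).
by apply: hN; [apply: leq_trans (Ga_ge a) | apply: leq_trans (Gb_ge b)].
Qed.

End Subsequences.

Section CompactnessCriterion.
Variable R : realType.
Implicit Types (x y : vec R) (U : op R).

Lemma psum2_double_succ y n :
  psum2 y n.+1.*2 = psum2 y n.*2 + (sqmod (y n.*2) + sqmod (y n.*2.+1)).
Proof. by rewrite doubleS !psum2S -addrA. Qed.

Lemma sqmod_block_apply_le U y q (c : R) : A0 U -> ell2 y ->
  (forall i j, sqmod (block U q i j) <= c) ->
  sqmod (U y q.*2) + sqmod (U y q.*2.+1) <= 4 * c * (sqmod (y q.*2) + sqmod (y q.*2.+1)).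
Proof.
move=> hU hy Uc; have c0 : 0 <= c := le_trans (sqmod_ge0 _) (Uc ord0 ord0).
have row_le (i : 'I_2) : sqmod (U y (q.*2 + i)%N) <= 2 * c * (sqmod (y q.*2) + sqmod (y q.*2.+1)).
  rewrite block_apply // big_ord_recr big_ord1 /= addn0 addn1.
  apply: le_trans (sqmodD_le _ _) _; rewrite !sqmodM [2 * c * _]mulrDr -!mulrA.
  by apply: lerD; apply: ler_wpM2l => //; apply: ler_wpM2r; rewrite ?sqmod_ge0 ?Uc.
have := row_le ord0; have := row_le ord_max; rewrite /= addn0 addn1; lra.
Qed.

Lemma psum2_A0_le U y Q (c d : R) : A0 U -> ell2 y ->
  (forall n i j, sqmod (block U n i j) <= c) ->
  (forall n, (Q <= n)%N -> forall i j, sqmod (block U n i j) <= d) ->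
  forall n, psum2 (U y) n.*2 <= 4 * (c * psum2 y (minn n Q).*2 + d * psum2 y n.*2).
Proof.
move=> hU hy Uc Ud n; elim: n => [|n IH]; first by rewrite min0n !psum2_0; lra.
have mass_ge0 := addr_ge0 (sqmod_ge0 (y n.*2)) (sqmod_ge0 (y n.*2.+1)).
have d0 : 0 <= d := le_trans (sqmod_ge0 _) (Ud Q (leqnn Q) ord0 ord0).
rewrite !psum2_double_succ; case: (ltnP n Q) => [nQ|Qn].
  rewrite (minn_idPl nQ) psum2_double_succ.
  have := sqmod_block_apply_le hU hy (Uc n); rewrite (minn_idPl (ltnW nQ)) in IH.
  by move: mass_ge0 d0; set m := _ + _; nra.
rewrite (minn_idPr (leqW Qn)); rewrite (minn_idPr Qn) in IH.
have := sqmod_block_apply_le hU hy (Ud n Qn).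
by move: mass_ge0; set m := _ + _; nra.
Qed.

Lemma psum2_le_const y K (eta : R) : (forall k, (k < K)%N -> sqmod (y k) <= eta) ->
  forall n, (n <= K)%N -> psum2 y n <= n%:R * eta.
Proof.
move=> yK; elim=> [|n IH] nK; first by rewrite psum2_0 mul0r.
by rewrite psum2S -addn1 natrD mulrDl mul1r lerD // ?IH ?yK // ltnW.
Qed.

Lemma cauchy_seq_uniform (u : nat -> vec R) K : (forall k, cauchy_seq (fun i => u i k)) ->
  forall eta : R, 0 < eta -> exists N, forall a b, (N <= a)%N -> (N <= b)%N ->
    forall k, (k < K)%N -> sqmod (u a k - u b k) <= eta.
Proof.
move=> u_cauchy eta eta_gt0; elim: K => [|K [N hN]]; first by exists 0%N.
have [N' hN'] := u_cauchy K eta eta_gt0.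
exists (maxn N N') => a b; rewrite !geq_max => /andP[Na N'a] /andP[Nb N'b] k.
by rewrite ltnS leq_eqVlt => /predU1P[->|kK]; [apply: hN' | apply: hN].
Qed.

Definition blocks_vanish U : Prop := forall eps : R, 0 < eps ->
  exists Q, forall n, (Q <= n)%N -> forall i j, sqmod (block U n i j) <= eps.

Lemma A0_blocks_vanish_compact U : A0 U -> blocks_vanish U -> compact_op U.
Proof.
move=> hU Uvan; split=> [|x M hx hM]; first exact: hU.1.
have [c [c0 Uc]] := entry_bounded hU.1.
have Ublock n i j : sqmod (block U n i j) <= c by rewrite mxE.
have M0 : 0 <= M by have := hM 0%N 0%N; rewrite psum2_0.
have [d [d_inc d_cauchy]] :=
  diagonal_subseq (fun j k => le_trans (sqmod_le_psum2 _ _) (hM j k.+1)).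
exists d; split=> // eps eps_gt0.
have [del [del_gt0 delE]] : exists del : R, 0 < del /\ del * (4 * (M + 1)) = eps / 8.
  exists (eps / (32 * (M + 1))); split; first by apply: divr_gt0 => //; lra.
  by field; lra.
have [Q UQ] := Uvan del del_gt0.
have Q0 : 0 <= (Q.*2)%:R :> R := ler0n _ _.
have [eta [eta_gt0 etaE]] :
    exists eta : R, 0 < eta /\ (c + 1) * (((Q.*2)%:R + 1) * eta) = eps / 8.
  exists (eps / (8 * (c + 1) * ((Q.*2)%:R + 1))).
  by split; [apply: divr_gt0 => //; apply: mulr_gt0; lra | field; lra].
have [N hN] := cauchy_seq_uniform Q.*2 d_cauchy eta_gt0.
exists N => a b Na Nb n; set y := vsub (x (d a)) (x (d b)).
have hy : ell2 y by apply: ell2_sub.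
rewrite -(bounded_opB hU.1 (hx _) (hx _)).
apply: le_trans (psum2_le_psum2 _ (_ : n <= n.*2)%N) _; first by rewrite -addnn leq_addr.
apply: le_trans (psum2_A0_le hU hy Ublock UQ n) _.
have low : c * psum2 y (minn n Q).*2 <= eps / 8.
  have : psum2 y (minn n Q).*2 <= (Q.*2)%:R * eta.
    apply: le_trans (psum2_le_const (hN a b Na Nb) _) _; first by rewrite leq_double geq_minr.
    by rewrite ler_pM2r // ler_nat leq_double geq_minr.
  move=> /(ler_wpM2l c0) /le_trans; apply.
  by rewrite -etaE !mulrA ler_pM2r //; nra.
have high : del * psum2 y n.*2 <= eps / 8.
  have : psum2 y n.*2 <= 4 * M.
    have := psum2_subB (x (d a)) (x (d b)) n.*2.
    by have := hM (d a) n.*2; have := hM (d b) n.*2; lra.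
  move=> /(ler_wpM2l (ltW del_gt0)) /le_trans; apply.
  by rewrite -delE ler_pM2l //; lra.
lra.
Qed.

End CompactnessCriterion.

Lemma infinite_unbounded (Y : set nat) : infinite_set Y ->
  forall N, exists2 n, (N <= n)%N & Y n.
Proof.
move=> Yinf N; apply: contrapT => none; apply/Yinf/(sub_finite_set _ (finite_II N)).
by move=> n Yn /=; rewrite ltnNge; apply/negP => Nn; apply: none; exists n.
Qed.

Lemma unbounded_infinite (Y : set nat) : (forall N, exists2 n, (N <= n)%N & Y n) ->
  infinite_set Y.
Proof.
move=> unb /finite_seqP[s Ys]; have [n max_lt] := unb (\max_(k <- s) k).+1.
by rewrite Ys => n_s; move: max_lt; rewrite ltnNge (leq_bigmax_seq n n_s).
Qed.

Section CompressedBlocks.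
Variable R : realType.
Implicit Types (A B K : op R).

(* Distinct basis vectors have images with disjoint block supports, so a
   Cauchy subsequence of [(K e_k)] forces the entries of [K] to vanish. *)
Lemma compact_A0_blocks_vanish K : compact_op K -> A0 K -> blocks_vanish K.
Proof.
move=> [_ Kcpt] [_ K0] eps eps_gt0; apply: contrapT => none.
have big N : exists km : nat * nat, (N <= km.1)%N /\ eps < sqmod (entry K km.1 km.2).
  apply: contrapT => small; apply: none; exists N => n Nn i j.
  rewrite mxE leNgt; apply/negP => lt; apply: small.
  by exists (n.*2 + j, n.*2 + i)%N; split => //=; lia.
have [g hg] := choice big.
have [phi [phi_inc phi_cauchy]] := Kcpt (fun t => e R (g t).1) 1
  (fun=> ell2_e _ _) (fun _ _ => psum2_e_le1 _ _ _).
have [N hN] := phi_cauchy eps eps_gt0.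
set k := (g (phi N)).1; set m := (g (phi N)).2.
pose b := maxn N (k + 2).
have := hN N b (leqnn N) (leq_maxl _ _) m.+1; apply/negP; rewrite -ltNge.
apply: lt_le_trans (sqmod_le_psum2 _ m).
rewrite /vsub -/(entry K k m) -/(entry K (g (phi b)).1 m).
have k_far : (k + 2 <= (g (phi b)).1)%N.
  apply: leq_trans (leq_maxr N _) _; apply: leq_trans (hg (phi b)).1.
  exact: leq_increasing.
have Kkm : entry K k m != 0.
  by apply: contraTneq (hg (phi N)).2 => ->; rewrite sqmod0 -leNgt ltW.
have -> : entry K (g (phi b)).1 m = 0.
  by apply/eqP; apply: contraTT k_far => /K0; have := K0 _ _ Kkm; lia.
by rewrite subr0; apply: (hg (phi N)).2.
Qed.

Lemma proj_e (X : set nat) k : X k./2 -> proj X (e R k) = e R k.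
Proof.
move=> Xk; apply: funext => i; rewrite /proj /e.
by case: eqP => [->|_]; [rewrite asboolT | case: ifP].
Qed.

Lemma block_compress (X : set nat) A B K n :
  (forall x, ell2 x -> comp (proj X) (comp A (proj X)) x = vadd (B x) (K x)) ->
  X n -> block A n = block B n + block K n.
Proof.
move=> AE Xn; apply/matrixP => i j; rewrite !mxE.
have := f_equal (fun v => v (n.*2 + i)%N) (AE _ (ell2_e R (n.*2 + j))).
by rewrite /comp /= proj_e ?half_block // /proj half_block asboolT.
Qed.

End CompressedBlocks.

Lemma commutator_blocks_vanish_on (R : realType) (X : set nat) (alpha : R) (S T : op R) :
  0 <= alpha <= 1 -> A0 S -> A0 T ->
  DKset X alpha (comp (proj X) (comp S (proj X))) ->
  DKset X alpha (comp (proj X) (comp T (proj X))) ->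
  forall eps : R, 0 < eps -> exists N, forall n, (N <= n)%N -> X n ->
    forall i j, sqmod (block (opsub (comp S T) (comp T S)) n i j) <= eps.
Proof.
move=> alpha01 hS hT [S' [K [hS' hK hKX SE]]] [T' [K' [hT' hK' hK'X TE]]] eps eps_gt0.
have [[cS [cS0 Sc]] [cT [cT0 Tc]]] := (entry_bounded hS.1, entry_bounded hT.1).
have [cK [cK0 Kc]] := entry_bounded hK.1.
pose a := 2 * cS + 2 * cK.
have a0 : 0 <= a by rewrite /a; lra.
have [del [del_gt0 delE]] : exists del : R, 0 < del /\ del * (32 * (a + cT + 1)) = eps.
  exists (eps / (32 * (a + cT + 1))); split; first by apply: divr_gt0 => //; lra.
  by field; lra.
have [N1 K_small] := compact_A0_blocks_vanish hK hKX.1 del_gt0.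
have [N2 K'_small] := compact_A0_blocks_vanish hK' hK'X.1 del_gt0.
exists (maxn N1 N2) => n; rewrite geq_max => /andP[N1n N2n] Xn i j.
have [Sn Tn] := (block_compress SE Xn, block_compress TE Xn).
have Un : block (opsub (comp S T) (comp T S)) n =
    mxcomm (block S' n) (block K' n) + mxcomm (block K n) (block T n).
  rewrite block_opsub (block_comp n hS hT.1) (block_comp n hT hS.1) -/(mxcomm _ _).
  rewrite {1}Sn mxcommDl {1}Tn mxcommDr.
  by rewrite {1}/mxcomm (Dset_block_commute alpha01 hS' hT' Xn) subrr add0r.
have S'c k l : sqmod (block S' n k l) <= a.
  have -> : block S' n = block S n - block K n by rewrite Sn addrK.
  rewrite !mxE; apply: le_trans (sqmodB_le _ _) _.
  have := Sc (n.*2 + l)%N (n.*2 + k)%N; have := Kc (n.*2 + l)%N (n.*2 + k)%N.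
  by rewrite /a; lra.
have Tnc k l : sqmod (block T n k l) <= cT by rewrite mxE.
have := sqmod_mxcomm_le S'c (K'_small n N2n) i j.
have := sqmod_mxcomm_le (K_small n N1n) Tnc i j.
rewrite Un; move: (mxcomm _ _) (mxcomm _ _) => V W Wb Vb.
rewrite mxE; apply: le_trans (sqmodD_le _ _) _; rewrite -delE.
nra.
Qed.

Lemma commutator_blocks_vanish (R : realType) (XX : set (set nat)) (alpha : set nat -> R)
  (S T : op R) : wide XX -> (forall X, XX X -> 0 <= alpha X <= 1) ->
  Mset XX alpha S -> Mset XX alpha T -> blocks_vanish (opsub (comp S T) (comp T S)).
Proof.
move=> hwide alpha01 hS hT eps eps_gt0; apply: contrapT => none.
set U := opsub (comp S T) (comp T S).
pose Y := [set n | exists i j, eps < sqmod (block U n i j)].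
have /hwide [X XX_X /infinite_unbounded XY_unb] : infinite_set Y.
  apply: unbounded_infinite => N; apply: contrapT => noY; apply: none.
  exists N => n Nn i j; rewrite leNgt; apply/negP => lt.
  by apply: noY; exists n => //; exists i, j.
have [N UN] := commutator_blocks_vanish_on (alpha01 X XX_X) hS.1 hT.1
  (hS.2 X XX_X) (hT.2 X XX_X) eps_gt0.
have [n Nn [Xn [i [j]]]] := XY_unb N.
by rewrite ltNge UN.
Qed.

Theorem lemma4p13 (R : realType) (XX : set (set nat)) (alpha : set nat -> R)
  (hwide : wide XX)
  (halpha : forall X, XX X -> 71%:R / 72%:R < alpha X <= 1)
  (S T : op R) (hS : Mset XX alpha S) (hT : Mset XX alpha T) :
  compact_op (opsub (comp S T) (comp T S)).
Proof.
have alpha01 X : XX X -> 0 <= alpha X <= 1.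
  move=> /halpha /andP[lb ->]; rewrite andbT; apply: le_trans (ltW lb).
  by rewrite divr_ge0.
apply: A0_blocks_vanish_compact.
  exact: A0_sub (A0_comp hS.1 hT.1) (A0_comp hT.1 hS.1).
exact: commutator_blocks_vanish hwide alpha01 hS hT.
Qed.
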